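(* Let $1\le p\le 2$, let $X$ and $Y$ be Banach spaces such that $X$ has type $p$, and let $u:X\to Y$ be a continuous linear operator. If the adjoint $u^*:Y^*\to X^*$ is almost $p^*$-summing (where $\frac1p+\frac1{p^*}=1$), then $u$ is Cohen strongly $p$-summing, i.e. $(u(x_i))_{i=1}^\infty\in\ell_p\langle Y\rangle$ whenever $(x_i)_{i=1}^\infty\in\ell_p(X)$.
   Context: $r_i$ denote the Rademacher functions. A Banach space $X$ has type $p$ if there is $C\ge0$ with $\left(\int_0^1\left\|\sum_{i=1}^m r_i(t)x_i\right\|^2dt\right)^{1/2}\le C\left(\sum_{i=1}^m\|x_i\|^p\right)^{1/p}$ for all $m$ and $x_1,\dots,x_m\in X$. For $1\le s\le\infty$, $\|(x_i)\|_{w,s}:=\sup_{x^*\in B_{X^*}}\|(x^*(x_i))_i\|_s$ and $\ell_s^w(X)$ is the space of sequences where this is finite. $\ell_p\langle Y\rangle$ is the space of sequences $(y_i)\subset Y$ with $\sup\{\sum_i|y_i^*(y_i)|:(y_i^* )\in B_{\ell_{p^*}^w(Y^* )}\}<\infty$. An operator $v\in\mathcal L(E,F)$ is almost $s$-summing if there is $C\ge0$ with $\left(\int_0^1\left\|\sum_{i=1}^m r_i(t)v(x_i)\right\|^2dt\right)^{1/2}\le C\|(x_i)_{i=1}^m\|_{w,s}$ for all $m$ and $x_1,\dots,x_m\in E$. *)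

From HB Require Import structures.
From mathcomp Require Import all_boot all_order all_algebra.
From mathcomp Require Import all_classical all_reals all_analysis.
Set Implicit Arguments. Unset Strict Implicit. Unset Printing Implicit Defensive.
Import Order.TTheory GRing.Theory Num.Theory.
Import numFieldNormedType.Exports.
Local Open Scope classical_set_scope.
Local Open Scope ring_scope.

Section Defs.
Variable R : realType.

Definition rademacher (n : nat) (t : R) : R := Num.sg (sin (2 ^+ n * pi * t)).

Definition sq_int01 (g : R -> R) : \bar R :=
  (\int[lebesgue_measure]_(t in `[0%R, 1%R]) ((g t) ^+ 2)%:E)%E.

Definition dual (X : normedModType R) : set (X -> R) :=
  [set f | (forall (a : R) (x y : X), f (a *: x + y) = a * f x + f y)
           /\ continuous f].
Arguments dual : clear implicits.

Definition dnorm (X : normedModType R) (f : X -> R) : R :=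
  sup [set `|f x| | x in [set x : X | `|x| <= 1]].
Arguments dnorm : clear implicits.

Definition bidual_ball (X : normedModType R) : set ((X -> R) -> R) :=
  [set phi | (forall (a : R) (f g : X -> R), f \in dual X -> g \in dual X ->
                phi (fun x => a * f x + g x) = a * phi f + phi g)
          /\ (forall f, f \in dual X -> `|phi f| <= dnorm X f)].
Arguments bidual_ball : clear implicits.

Definition conj_exp (p : R) : \bar R :=
  if p == 1 then +oo%E else (p / (p - 1))%:E.

Definition lnorm_fin (s : \bar R) (m : nat) (a : 'I_m -> R) : R :=
  match s with
  | +oo%E => \big[Order.max/0]_(i < m) `|a i|
  | r%:E => (\sum_(i < m) `|a i| `^ r) `^ r^-1
  | -oo%E => 0
  end.

Definition has_type (p : R) (X : normedModType R) : Prop :=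
  exists C : R, 0 <= C /\
    forall (m : nat) (x : 'I_m -> X),
      (sq_int01 (fun t => `|\sum_(i < m) rademacher i.+1 t *: x i|%R)
        <= ((C * (\sum_(i < m) `|x i| `^ p) `^ p^-1) ^+ 2)%:E)%E.

Definition weak_norm_dual (s : \bar R) (Y : normedModType R) (m : nat)
  (ys : 'I_m -> (Y -> R)) : R :=
  sup [set lnorm_fin s (fun i => phi (ys i)) | phi in bidual_ball Y].

Definition adjoint (X Y : normedModType R) (u : X -> Y) (g : Y -> R) : X -> R :=
  fun x => g (u x).

Definition adjoint_almost_summing (s : \bar R) (X Y : normedModType R)
  (u : X -> Y) : Prop :=
  exists C : R, 0 <= C /\
    forall (m : nat) (ys : 'I_m -> (Y -> R)), (forall i, ys i \in dual Y) ->
      (sq_int01 (fun t => dnorm X (fun x : X =>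
                  (\sum_(i < m) rademacher i.+1 t * adjoint u (ys i) x)%R))
        <= ((C * weak_norm_dual s ys) ^+ 2)%:E)%E.

Definition weak_ball_dual (s : \bar R) (Y : normedModType R)
  (ys : nat -> (Y -> R)) : Prop :=
  (forall i, ys i \in dual Y) /\
  forall phi, phi \in bidual_ball Y ->
    match s return Prop with
    | +oo%E => forall i, `|phi (ys i)| <= 1
    | r%:E => (\sum_(0 <= i <oo) (`|phi (ys i)| `^ r)%:E <= 1)%E
    | -oo%E => False
    end.

Definition in_lp (p : R) (X : normedModType R) (x : nat -> X) : Prop :=
  (\sum_(0 <= i <oo) (`|x i| `^ p)%:E < +oo)%E.

Definition in_cohen_lp (p : R) (Y : normedModType R) (y : nat -> Y) : Prop :=
  exists M : R, forall ys : nat -> (Y -> R), weak_ball_dual (conj_exp p) ys ->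
    (\sum_(0 <= i <oo) (`|ys i (y i)|)%:E <= M%:E)%E.

Definition cohen_strongly_summing (p : R) (X Y : normedModType R)
  (u : X -> Y) : Prop :=
  forall x : nat -> X, in_lp p x -> in_cohen_lp p (fun i => u (x i)).

End Defs.

(* Given x_1, ..., x_m in X and functionals y_1, y_2, ... in the unit ball of
   weak l_{p'}(Y'), change the signs of the y_i so that every y_i(u x_i) >= 0.
   By orthogonality of the Rademacher functions,
     sum_i y_i(u x_i) = int_0^1 (sum_i r_i(t) u' y_i)(sum_j r_j(t) x_j) dt,
   with u' the adjoint of u.  Bounding the integrand by the product of the two
   norms and then by AM-GM, this is at most half the sum of the mean squares of
   ||sum_i r_i u' y_i|| and ||sum_j r_j x_j||.  The first is bounded by the
   almost summing constant of u' (the sign change keeps the weak norm <= 1), the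
   second by the type constant of X times ||(x_i)||_p, uniformly in m.  As
   r_1, ..., r_m are constant on the dyadic intervals of length 2^-m, all these
   integrals are finite averages over sign vectors. *)

From HB Require Import structures.
From mathcomp Require Import all_boot all_order all_algebra.
From mathcomp Require Import all_classical all_reals all_analysis.
From mathcomp Require Import measurable_realfun lra.
Import Order.TTheory GRing.Theory Num.Theory.
Import numFieldNormedType.Exports.
Local Open Scope classical_set_scope.
Local Open Scope ring_scope.

Set Implicit Arguments.
Unset Strict Implicit.
Unset Printing Implicit Defensive.

Section SignVectors.
Context {R : realType}.

(* The binary digits of k, most significant first, read as signs: the value of
   (r_1, ..., r_m) on the k-th dyadic interval of length 2^-m. *)
Definition sign_vec (m k : nat) : 'I_m -> R :=
  fun i => (-1) ^+ (k %/ 2 ^ (m - i.+1)).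
Arguments sign_vec : clear implicits.

Definition vcons m (a : R) (v : 'I_m -> R) : 'I_m.+1 -> R :=
  fun i => if unlift ord0 i is Some j then v j else a.

Lemma vcons0 m a (v : 'I_m -> R) : vcons a v ord0 = a.
Proof. by rewrite /vcons unlift_none. Qed.

Lemma vcons_lift m a (v : 'I_m -> R) (j : 'I_m) : vcons a v (lift ord0 j) = v j.
Proof. by rewrite /vcons liftK. Qed.

Lemma sign_vecS m k :
  sign_vec m.+1 k = vcons ((-1) ^+ (k %/ 2 ^ m)) (sign_vec m (k %% 2 ^ m)).
Proof.
apply/funext => i; case: (unliftP ord0 i) => [j ->|->]; last first.
  by rewrite vcons0 /sign_vec /= subSS subn0.
rewrite vcons_lift /sign_vec /= subSS.
have e : (2 ^ m = 2 ^ j.+1 * 2 ^ (m - j.+1))%N by rewrite -expnD subnKC.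
rewrite -signr_odd -[in RHS]signr_odd; congr (_ ^+ _).
rewrite {1}(divn_eq k (2 ^ m)) {2}e mulnA divnMDl ?expn_gt0 //.
by rewrite oddD oddM oddX /= andbF.
Qed.

Lemma sum_sign_vecS m (F : ('I_m.+1 -> R) -> R) :
  \sum_(0 <= k < 2 ^ m.+1) F (sign_vec m.+1 k) =
  \sum_(0 <= k < 2 ^ m) F (vcons 1 (sign_vec m k)) +
  \sum_(0 <= k < 2 ^ m) F (vcons (-1) (sign_vec m k)).
Proof.
rewrite expnS mul2n -addnn (big_cat_nat _ (leq_addr _ _)) //=; congr (_ + _).
  rewrite !big_nat; apply: eq_bigr => k /andP[_ hk].
  by rewrite sign_vecS divn_small // modn_small.
rewrite -[in X in \sum_(X <= _ < _) _](add0n (2 ^ m)%N) big_addn addnK !big_nat.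
apply: eq_bigr => k /andP[_ hk].
rewrite sign_vecS divnDr ?dvdnn // divnn expn_gt0 /= divn_small // add0n.
by rewrite -modnDmr modnn addn0 modn_small // expr1.
Qed.

Lemma sum_sign_vec_mul m (i j : 'I_m) :
  \sum_(0 <= k < 2 ^ m) sign_vec m k i * sign_vec m k j = (i == j)%:R * (2 ^ m)%:R.
Proof.
elim: m i j => [|m IH] i j; first by case: i.
rewrite (sum_sign_vecS (fun v => v i * v j)).
case: (unliftP ord0 i) => [i' ->|->]; case: (unliftP ord0 j) => [j' ->|->].
- under eq_bigr do rewrite !vcons_lift.
  under [X in _ + X]eq_bigr do rewrite !vcons_lift.
  by rewrite IH (inj_eq (@lift_inj _ ord0)) -mulrDr -natrD addnn -mul2n -expnS.
- under eq_bigr do rewrite !vcons_lift !vcons0 mulr1.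
  under [X in _ + X]eq_bigr do rewrite !vcons_lift !vcons0 mulrN1.
  by rewrite sumrN subrr eq_sym (negbTE (neq_lift _ _)) mul0r.
- under eq_bigr do rewrite !vcons_lift !vcons0 mul1r.
  under [X in _ + X]eq_bigr do rewrite !vcons_lift !vcons0 mulN1r.
  by rewrite sumrN subrr (negbTE (neq_lift _ _)) mul0r.
- under eq_bigr do rewrite !vcons0 mulr1.
  under [X in _ + X]eq_bigr do rewrite !vcons0 mulrNN mulr1.
  by rewrite eqxx mul1r big_const_nat subn0 iter_addr addr0 -natrD addnn -mul2n -expnS.
Qed.

End SignVectors.
Arguments sign_vec {R} m k _.

Section Rademacher.
Context {R : realType}.

Definition dyadic_itv (m k : nat) : set R :=
  `]k%:R / (2 ^ m)%:R, k.+1%:R / (2 ^ m)%:R[%classic.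

Lemma dyadic_itvE m k t :
  dyadic_itv m k t = (k%:R < t * (2 ^ m)%:R < k.+1%:R).
Proof.
by rewrite /dyadic_itv /= in_itv /= ltr_pdivrMr ?ltr_pdivlMr ?ltr0n ?expn_gt0.
Qed.

Lemma sgr_sin (j : nat) (x : R) :
  pi *+ j < x < pi *+ j.+1 -> Num.sg (sin x) = (-1) ^+ j.
Proof.
move=> /andP[lo hi]; rewrite -(subrK (pi *+ j) x) (alternatingn (@sinDpi R)).
rewrite sgrM sgrX sgrN1 gtr0_sg ?mulr1 //.
by apply: sin_gt0_pi; rewrite subr_gt0 lo ltrBlDr -mulrS.
Qed.

Lemma rademacher_dyadic m k (i : 'I_m) (t : R) :
  dyadic_itv m k t -> rademacher i.+1 t = sign_vec m k i.
Proof.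
rewrite dyadic_itvE => /andP[lo hi].
set e := (m - i.+1)%N; set j := (k %/ 2 ^ e)%N.
have em : (2 ^ m = 2 ^ i.+1 * 2 ^ e)%N by rewrite -expnD subnKC.
have e_gt0 : (0 : R) < (2 ^ e)%:R by rewrite ltr0n expn_gt0.
have jk : (j * 2 ^ e <= k)%N by apply: leq_divM.
have kj : (k < j.+1 * 2 ^ e)%N by apply: ltn_ceil; rewrite expn_gt0.
have tE : t * (2 ^ m)%:R = 2 ^+ i.+1 * t * (2 ^ e)%:R.
  by rewrite em natrM natrX mulrA [t * _]mulrC.
rewrite /rademacher /sign_vec -/e -/j; apply: sgr_sin.
rewrite -[pi *+ j]mulr_natl -[pi *+ j.+1]mulr_natl mulrAC !ltr_pM2r ?pi_gt0 //.
apply/andP; split; rewrite -(ltr_pM2r e_gt0) -natrM -tE.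
  by apply: le_lt_trans lo; rewrite ler_nat.
by apply: lt_le_trans hi _; rewrite ler_nat.
Qed.

End Rademacher.

Section DyadicIntegral.
Context {R : realType}.

Definition dyadic_points (m : nat) : set R :=
  range (fun k : nat => k%:R / (2 ^ m)%:R).

Lemma dyadic_itv_uniq m k j (t : R) :
  dyadic_itv m k t -> dyadic_itv m j t -> k = j.
Proof.
rewrite !dyadic_itvE => /andP[kt tk] /andP[jt tj].
have : (k < j.+1)%N by rewrite -(ltr_nat R); exact: lt_trans tj.
have : (j < k.+1)%N by rewrite -(ltr_nat R); exact: lt_trans tk.
by rewrite !ltnS => jk kj; apply/eqP; rewrite eqn_leq kj jk.
Qed.

Lemma dyadic_itv_cover m (t : R) : `[0, 1]%classic t -> ~ dyadic_points m t ->
  exists2 k, (k < 2 ^ m)%N & dyadic_itv m k t.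
Proof.
rewrite /= in_itv /= => /andP[t0 t1] tNdyadic.
have N_gt0 : (0 : R) < (2 ^ m)%:R by rewrite ltr0n expn_gt0.
have /andP[kt tk] := truncn_itv (mulr_ge0 t0 (ltW N_gt0)).
set k := Num.truncn _ in kt tk.
have {}kt : k%:R < t * (2 ^ m)%:R.
  rewrite lt_def kt andbT; apply/eqP => kE; apply: tNdyadic; exists k => //.
  by rewrite -kE mulrK // unitfE gt_eqF.
exists k; last by rewrite dyadic_itvE kt tk.
rewrite ltnNge; apply/negP => Nk; apply: tNdyadic; exists (2 ^ m)%N => //.
rewrite divff ?gt_eqF //; apply/eqP; rewrite eq_le t1 andbT.
rewrite -(ler_pM2r N_gt0) mul1r; apply: le_trans _ (ltW kt); by rewrite ler_nat.
Qed.

Lemma measurable_fun_eq_except (D Z : set R) (f h : R -> R) :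
  measurable D -> countable Z -> measurable_fun D h ->
  (forall t, D t -> ~ Z t -> f t = h t) -> measurable_fun D f.
Proof.
move=> mD cZ mh fh _ Y mY.
have mZ : measurable Z by apply: countable_measurable => //; exact: measurable_set1.
have -> : D `&` f @^-1` Y = ((D `&` h @^-1` Y) `&` ~` Z) `|` (D `&` Z `&` f @^-1` Y).
  apply/seteqP; split => t /=.
  - move=> [Dt Yft]; case: (pselect (Z t)) => Zt; [right | left] => //.
    by split => //; split => //; rewrite -fh.
  - by case => [[[Dt Yht] nZ] | [[Dt Zt] Yft]]; split => //; rewrite fh.
apply: measurableU; first by apply: measurableI; [exact: mh | exact: measurableC].
apply: countable_measurable; first exact: measurable_set1.
by apply: sub_countable cZ; apply: subset_card_le => t [[]].
Qed.

Lemma measurable_dyadic_itv m k : measurable (@dyadic_itv R m k).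
Proof. exact: measurable_itv. Qed.

Lemma lebesgue_measure_dyadic_itv m k :
  lebesgue_measure (@dyadic_itv R m k) = ((2 ^ m)%:R^-1)%:E.
Proof.
have N_gt0 : (0 : R) < (2 ^ m)%:R by rewrite ltr0n expn_gt0.
rewrite lebesgue_measure_itv /= ifT; last first.
  by rewrite lte_fin ltr_pM2r ?invr_gt0 // ltr_nat.
by rewrite -EFinB -mulrBl -natrB // subSnn mul1r.
Qed.

Lemma dyadic_itv_sub01 m k :
  (k < 2 ^ m)%N -> dyadic_itv m k `<=` (`[0, 1]%classic : set R).
Proof.
move=> km t; rewrite dyadic_itvE /= in_itv /= => /andP[kt tk].
have N_gt0 : (0 : R) < (2 ^ m)%:R by rewrite ltr0n expn_gt0.
apply/andP; split.
  by rewrite -(pmulr_lge0 _ N_gt0); apply: le_trans (ltW kt).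
rewrite -(ler_pM2r N_gt0) mul1r; apply: ltW (lt_le_trans tk _).
by rewrite ler_nat.
Qed.

Lemma integral_dyadic_step m (c : nat -> R) : (forall k, 0 <= c k) ->
  (\int[lebesgue_measure]_(t in `[0%R, 1%R]%classic)
     (\sum_(0 <= k < 2 ^ m) c k * \1_(dyadic_itv m k) t)%:E =
   ((\sum_(0 <= k < 2 ^ m) c k) / (2 ^ m)%:R)%:E)%E.
Proof.
move=> c_ge0; under eq_integral do rewrite -sumEFin.
have mstep k : measurable_fun (`[0%R, 1%R]%classic : set R)
    (fun t => (c k * \1_(dyadic_itv m k) t)%:E).
  apply/measurable_EFinP; apply: measurable_funM => //.
  apply: measurable_indic; exact: measurable_dyadic_itv.
rewrite ge0_integral_sum //; last by move=> k t _; rewrite lee_fin mulr_ge0.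
rewrite big_distrl -sumEFin big_nat [in RHS]big_nat.
apply: eq_bigr => k /andP[_ km].
have c_ge0' : c k < 0 -> @dyadic_itv R m k = set0 by rewrite ltNge c_ge0.
have := @integralZl_indic _ _ _ lebesgue_measure _ (measurable_itv `[0%R, 1%R])
  (fun=> dyadic_itv m k) (c k) c_ge0' (measurable_dyadic_itv m k).
rewrite /= => ->; rewrite integral_indic; first last.
- exact: measurable_dyadic_itv.
- exact: measurable_itv.
rewrite setIidl; last exact: dyadic_itv_sub01.
by have := lebesgue_measure_dyadic_itv m k; rewrite /= => ->.
Qed.

(* The integrand depends on t only through (r_1(t), ..., r_m(t)), which is
   constant, equal to [sign_vec m k], on the k-th dyadic interval. *)
Lemma sq_int01_dyadic m (G : ('I_m -> R) -> R) :
  sq_int01 (fun t => G (fun i => rademacher i.+1 t)) =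
  ((\sum_(0 <= k < 2 ^ m) G (sign_vec m k) ^+ 2) / (2 ^ m)%:R)%:E.
Proof.
pose c k := G (sign_vec m k) ^+ 2.
pose h (t : R) := \sum_(0 <= k < 2 ^ m) c k * \1_(dyadic_itv m k) t.
have cZ : countable (dyadic_points m).
  by apply: sub_countable (card_image_le _ _) _; exact: countableP.
have hE t : `[0, 1]%classic t -> ~ dyadic_points m t ->
    G (fun i => rademacher i.+1 t) ^+ 2 = h t.
  move=> t01 tNdyadic; have [k km tk] := dyadic_itv_cover t01 tNdyadic.
  rewrite /h (bigD1_seq k) ?mem_index_iota ?iota_uniq //= big1 ?addr0.
    rewrite indicE mem_set // mulr1; congr (G _ ^+ 2).
    by apply/funext => i; exact: rademacher_dyadic.
  move=> j jk; rewrite indicE memNset ?mulr0 // => tj.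
  by rewrite (dyadic_itv_uniq tj tk) eqxx in jk.
have mh : measurable_fun (`[0%R, 1%R]%classic : set R) h.
  apply: measurable_sum => k; apply: measurable_funM => //.
  apply: measurable_indic; exact: measurable_dyadic_itv.
rewrite /sq_int01 -(integral_dyadic_step m (fun k => sqr_ge0 _)).
apply: ae_eq_integral.
- exact: measurable_itv.
- apply/measurable_EFinP.
  exact: (measurable_fun_eq_except (measurable_itv _) cZ mh hE).
- exact/measurable_EFinP.
- exists (dyadic_points m); split.
  + by apply: countable_measurable => //; exact: measurable_set1.
  + exact: countable_lebesgue_measure0.
  + move=> t /= tNeq; apply: contrapT => tNdyadic; apply: tNeq => t01.
    by rewrite hE.
Qed.

End DyadicIntegral.

Section DualSpace.
Context {R : realType} {V : normedModType R}.
Implicit Types (f g : V -> R) (a : R).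

Lemma dual_linear f :
  f \in @dual R V -> exists g : {linear V -> R}, g = f :> (V -> R).
Proof.
case/set_mem => f_lin _.
by exists (HB.pack_for {linear V -> R} f (GRing.isLinear.Build _ _ _ _ f f_lin)).
Qed.

Lemma dual_bounded f : f \in @dual R V -> forall z, `|f z| <= dnorm f * `|z|.
Proof.
move=> fD; have [_ f_cont] := set_mem fD; have [g gf] := dual_linear fD; subst f.
have [M gM] := proj2 (bounded_funP g) (proj2 (linear_bounded_continuous g) f_cont) 1.
have g_ub : has_ubound [set `|g x| | x in [set x : V | `|x| <= 1]].
  by exists M => _ [x x1 <-]; exact: gM.
move=> z; have [->|z0] := eqVneq z 0; first by rewrite linear0 !normr0 mulr0.
rewrite -ler_pdivrMr ?normr_gt0 //.
have <- : `|g (`|z|^-1 *: z)| = `|g z| / `|z|.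
  by rewrite linearZ normrM /= ger0_norm ?invr_ge0 // mulrC.
by apply: (ub_le_sup g_ub); exists (`|z|^-1 *: z) => //; rewrite /= normfZV.
Qed.

Lemma dual0 : (fun=> 0 : R) \in @dual R V.
Proof.
by apply/mem_set; split=> [a x y|]; [rewrite mulr0 addr0 | exact: cst_continuous].
Qed.

Lemma dualD f g :
  f \in @dual R V -> g \in @dual R V -> (fun z => f z + g z) \in @dual R V.
Proof.
move=> /set_mem[f_lin f_cont] /set_mem[g_lin g_cont]; apply/mem_set; split.
  by move=> a x y; rewrite f_lin g_lin mulrDr addrACA.
by move=> z; exact: cvgD (f_cont z) (g_cont z).
Qed.

Lemma dualZ a f : f \in @dual R V -> (fun z => a * f z) \in @dual R V.
Proof.
move=> /set_mem[f_lin f_cont]; apply/mem_set; split.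
  by move=> b x y; rewrite f_lin mulrDr mulrCA.
by move=> z; exact: cvgM (cvg_cst a) (f_cont z).
Qed.

Lemma dual_sum (I : Type) (r : seq I) (c : I -> R) (f : I -> V -> R) :
  (forall i, f i \in @dual R V) -> (fun z => \sum_(i <- r) c i * f i z) \in @dual R V.
Proof.
move=> fD; elim: r => [|i r IH].
  by under eq_fun do rewrite big_nil; exact: dual0.
by under eq_fun do rewrite big_cons; exact: dualD (dualZ _ (fD i)) IH.
Qed.

Lemma dual_adjoint (W : normedModType R) (u : {linear W -> V}) f :
  continuous u -> f \in @dual R V -> adjoint u f \in @dual R W.
Proof.
move=> u_cont /set_mem[f_lin f_cont]; apply/mem_set; split.
  by move=> a x y; rewrite /adjoint linearP f_lin.
by move=> x; apply: continuous_comp; [exact: u_cont | exact: f_cont].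
Qed.

Lemma bidual_ballZ (phi : (V -> R) -> R) a f : bidual_ball phi ->
  f \in @dual R V -> phi (fun z => a * f z) = a * phi f.
Proof.
move=> [phi_lin _] fD.
have phi0 : phi (fun=> 0) = 0.
  have := phi_lin 1 _ _ dual0 dual0.
  rewrite (_ : (fun x => _) = fun=> 0); last by apply/funext => z; rewrite mulr0 addr0.
  by move=> h; lra.
have := phi_lin a _ _ fD dual0; rewrite phi0 addr0 => <-.
by congr phi; apply/funext => z; rewrite addr0.
Qed.

End DualSpace.

Section Series.
Context {R : realType}.
Implicit Types (f : nat -> R) (M : R).

Lemma partial_le_nneseries f m : (forall i, 0 <= f i) ->
  ((\sum_(i < m) f i)%:E <= \sum_(0 <= i <oo) (f i)%:E)%E.
Proof.
move=> f_ge0; rewrite -sumEFin -(big_mkord xpredT (fun i => (f i)%:E)).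
by apply: nneseries_lim_ge => i _ _; rewrite lee_fin.
Qed.

Lemma nneseries_le f M : (forall i, 0 <= f i) ->
  (forall m, \sum_(i < m) f i <= M) -> (\sum_(0 <= i <oo) (f i)%:E <= M%:E)%E.
Proof.
move=> f_ge0 fM; apply: lime_le.
  by apply: is_cvg_nneseries => i _ _; rewrite lee_fin.
by apply: nearW => m; rewrite sumEFin lee_fin big_mkord.
Qed.

Lemma nneseries_fin_partial_bounded f : (forall i, 0 <= f i) ->
  (\sum_(0 <= i <oo) (f i)%:E < +oo)%E -> exists M, forall m, \sum_(i < m) f i <= M.
Proof.
move=> f_ge0 f_fin; exists (fine (\sum_(0 <= i <oo) (f i)%:E)) => m.
rewrite -lee_fin fineK ?partial_le_nneseries // ge0_fin_numE //.
by apply: nneseries_ge0 => i _ _; rewrite lee_fin.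
Qed.

End Series.

Section WeakNorm.
Context {R : realType}.

Lemma sup_ge0_le1 (E : set R) : (forall v, E v -> 0 <= v <= 1) -> 0 <= sup E <= 1.
Proof.
move=> E01; have [->|/set0P[v Ev]] := eqVneq E set0; first by rewrite sup0 lexx ler01.
have E_ub : has_ubound E by exists 1 => w /E01/andP[].
have /andP[v0 _] := E01 v Ev; rewrite (le_trans v0 (ub_le_sup E_ub Ev)) /=.
by apply: ge_sup => [|w /E01/andP[]]; first by exists v.
Qed.

Lemma eq_lnorm_fin s m (a b : 'I_m -> R) :
  (forall i, `|a i| = `|b i|) -> lnorm_fin s a = lnorm_fin s b.
Proof.
move=> ab; case: s => [r| |] /=; last by [].
- by congr powR; apply: eq_bigr => i _; rewrite ab.
- by apply: eq_bigr => i _; rewrite ab.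
Qed.

Lemma lnorm_fin_ge0 s m (a : 'I_m -> R) : 0 <= lnorm_fin s a.
Proof. by case: s => [r| |] //=; [exact: powR_ge0 | exact: bigmax_ge_id]. Qed.

Lemma weak_norm_dual_sign_le1 (Y : normedModType R) p (ys : nat -> Y -> R)
    m (eps : 'I_m -> R) :
  1 <= p -> weak_ball_dual (conj_exp p) ys -> (forall i, `|eps i| = 1) ->
  0 <= weak_norm_dual (conj_exp p) (fun i z => eps i * ys i z) <= 1.
Proof.
move=> p1 [ysD ys_ball] eps1; apply: sup_ge0_le1 => _ [phi phiB <-].
rewrite lnorm_fin_ge0 (@eq_lnorm_fin _ _ _ (fun i => phi (ys i))) /=; last first.
  by move=> i; rewrite (bidual_ballZ _ phiB (ysD i)) normrM eps1 mul1r.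
move: (ys_ball phi (mem_set phiB)); rewrite /conj_exp; case: eqP => [_|p_neq1] /=.
  by move=> ys1; apply: bigmax_le => // i _; exact: ys1.
set r := p / (p - 1) => ys1.
have r_ge0 : 0 <= r^-1 by rewrite invr_ge0 divr_ge0 //; lra.
have sum_le1 : \sum_(i < m) `|phi (ys i)| `^ r <= 1.
  rewrite -lee_fin; apply: le_trans (partial_le_nneseries _ _) ys1 => i.
  exact: powR_ge0.
have := ge0_ler_powR r_ge0 _ _ sum_le1; rewrite powR1; apply.
  by rewrite nnegrE sumr_ge0 // => i _; exact: powR_ge0.
by rewrite nnegrE ler01.
Qed.

End WeakNorm.

Section Averaging.
Context {R : realType}.

Lemma sum_sign_vec_pairing (V : lmodType R) m (f : 'I_m -> {linear V -> R})
    (x : 'I_m -> V) :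
  \sum_(0 <= k < 2 ^ m)
     \sum_(i < m) sign_vec m k i * f i (\sum_(j < m) sign_vec m k j *: x j) =
  (2 ^ m)%:R * \sum_(i < m) f i (x i).
Proof.
under eq_bigr do under eq_bigr do rewrite linear_sum mulr_sumr.
rewrite exchange_big mulr_sumr; apply: eq_bigr => i _ /=.
rewrite exchange_big (bigD1 i) //= [X in _ + X]big1 ?addr0 => [|j ji].
  under eq_bigr do rewrite linearZ mulrA.
  by rewrite -mulr_suml sum_sign_vec_mul eqxx mul1r.
under eq_bigr do rewrite linearZ mulrA.
by rewrite -mulr_suml sum_sign_vec_mul eq_sym (negbTE ji) !mul0r.
Qed.

Lemma sum_dual_pairing_le (V : normedModType R) m (f : 'I_m -> V -> R)
    (x : 'I_m -> V) (A B : R) :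
  (forall i, f i \in @dual R V) ->
  (sq_int01 (fun t => dnorm (fun z => \sum_(i < m) rademacher i.+1 t * f i z)%R)
     <= A%:E)%E ->
  (sq_int01 (fun t => `|\sum_(i < m) rademacher i.+1 t *: x i|%R) <= B%:E)%E ->
  \sum_(i < m) f i (x i) <= (A + B) / 2.
Proof.
move=> fD.
rewrite (sq_int01_dyadic (fun v => dnorm (fun z => \sum_(i < m) v i * f i z))).
rewrite (sq_int01_dyadic (fun v => `|\sum_(i < m) v i *: x i|)) !lee_fin => fA xB.
have [g gf] := choice (fun i => dual_linear (fD i)).
set a := fun k => dnorm (fun z => \sum_(i < m) sign_vec m k i * f i z).
set b := fun k => `|\sum_(i < m) sign_vec m k i *: x i|.
have N_gt0 : (0 : R) < (2 ^ m)%:R by rewrite ltr0n expn_gt0.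
rewrite !ler_pdivrMr // in fA xB; rewrite -(ler_pM2l N_gt0).
suff : (2 ^ m)%:R * \sum_(i < m) f i (x i) <=
       (\sum_(0 <= k < 2 ^ m) a k ^+ 2 + \sum_(0 <= k < 2 ^ m) b k ^+ 2) / 2.
  by lra.
under eq_bigr do rewrite -gf.
rewrite -sum_sign_vec_pairing -big_split mulr_suml /= ler_sum // => k _.
under eq_bigr do rewrite gf.
have /dual_bounded pairing_le := dual_sum (index_enum 'I_m) (sign_vec m k) fD.
apply: le_trans (ler_norm _) (le_trans (pairing_le _) _).
change (a k * b k <= (a k ^+ 2 + b k ^+ 2) / 2).
have := sqr_ge0 (a k - b k); rewrite sqrrB; lra.
Qed.

End Averaging.

Theorem corollary2p3 (R : realType) (X Y : completeNormedModType R) (p : R)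
  (hp1 : 1 <= p) (hp2 : p <= 2)
  (u : {linear X -> Y}) (ucont : continuous u) :
  has_type p X ->
  adjoint_almost_summing (conj_exp p) u ->
  cohen_strongly_summing p u.
Proof.
move=> [C2 [C2_ge0 typeX]] [C1 [C1_ge0 almost_summing]] x x_lp.
have [P partial_le] := nneseries_fin_partial_bounded (fun i => powR_ge0 _ _) x_lp.
exists ((C1 ^+ 2 + (C2 * P `^ p^-1) ^+ 2) / 2) => ys ys_ball.
apply: nneseries_le => [i|m]; first exact: normr_ge0.
pose eps (i : 'I_m) : R := if 0 <= ys i (u (x i)) then 1 else -1.
have eps1 i : `|eps i| = 1 by rewrite /eps; case: ifP; rewrite ?normrN normr1.
pose y (i : 'I_m) (z : Y) := eps i * ys i z.
have yD i : y i \in @dual R Y by apply: dualZ; case: ys_ball.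
have -> : \sum_(i < m) `|ys i (u (x i))| = \sum_(i < m) adjoint u (y i) (x i).
  apply: eq_bigr => i _; rewrite /adjoint /y /eps; case: ifPn => [y_ge0|].
    by rewrite mul1r ger0_norm.
  by rewrite -ltNge mulN1r => /ltr0_norm.
have /andP[w_ge0 w_le1] := weak_norm_dual_sign_le1 hp1 ys_ball eps1.
have P_ge0 : 0 <= P by apply: le_trans (partial_le 0%N); rewrite big_ord0.
have Q_le : (\sum_(i < m) `|x i| `^ p) `^ p^-1 <= P `^ p^-1.
  apply: ge0_ler_powR; rewrite ?nnegrE ?partial_le //; first by rewrite invr_ge0; lra.
  by apply: sumr_ge0 => i _; exact: powR_ge0.
apply: le_trans (sum_dual_pairing_le (fun i => dual_adjoint ucont (yD i))
  (almost_summing m y yD) (typeX m (fun i => x i))) _.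
rewrite ler_pM2r // lerD // ler_sqr ?nnegrE ?mulr_ge0 ?powR_ge0 //.
  by rewrite ler_piMr.
by rewrite ler_wpM2l.
Qed.
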